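(* Let $\alpha\in(0,1)$ and $\vartheta>0$, and let $M_\alpha(u_1,u_2)=\min\{u_1^{1-\alpha}u_2,\,u_1\}$ (Marshall–Olkin copula) and $C_\vartheta(u_1,u_2)=(u_1^{-\vartheta}+u_2^{-\vartheta}-1)^{-1/\vartheta}$ (Clayton copula). Then $\Lambda(\boldsymbol w;M_\alpha)=0<\Lambda(\boldsymbol w;C_\vartheta)$ for all $\boldsymbol w\in(0,\infty)^2$, so $M_\alpha<_{TD}C_\vartheta$, while $C_\vartheta(t,t^\alpha)<M_\alpha(t,t^\alpha)=t$ for all $t\in(0,1)$. In particular $M_\alpha\le_{loc}C_\vartheta$ fails, so $C_1<_{TD}C_2$ does not imply $C_1\le_{loc}C_2$ in general.
   Context: The tail dependence function of a $d$-copula $C$ is $\Lambda(\boldsymbol w;C)=\lim_{s\searrow0}C(s\boldsymbol w)/s$, $\boldsymbol w\in[0,\infty)^d$. $C_1<_{TD}C_2$ means $\Lambda(\boldsymbol w;C_1)<\Lambda(\boldsymbol w;C_2)$ for all $\boldsymbol w\in(0,\infty)^d$. $C_1\le_{loc}C_2$ means there is $\varepsilon>0$ with $C_1(\boldsymbol u)\le C_2(\boldsymbol u)$ for all $\boldsymbol u\in B_\varepsilon(\boldsymbol 0)\cap[0,1]^d$ (Euclidean ball). *)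

From Stdlib Require Import Reals Lra.
From Coquelicot Require Import Coquelicot.
Open Scope R_scope.

(* Bivariate copulas are represented as functions R -> R -> R; only their
   values on [0,1]^2 matter. *)

(* Marshall-Olkin copula M_alpha(u1,u2) = min(u1^(1-alpha) u2, u1)
   (set to 0 on the boundary where some u_i = 0, where the formula gives 0). *)
Definition MO (alpha : R) (u1 u2 : R) : R :=
  if Rle_dec u1 0 then 0 else if Rle_dec u2 0 then 0
  else Rmin (Rpower u1 (1 - alpha) * u2) u1.

(* Clayton copula C_theta(u1,u2) = (u1^-theta + u2^-theta - 1)^(-1/theta),
   extended by 0 when some u_i = 0 (its continuous extension). *)
Definition Clayton (theta : R) (u1 u2 : R) : R :=
  if Rle_dec u1 0 then 0 else if Rle_dec u2 0 then 0
  else Rpower (Rpower u1 (- theta) + Rpower u2 (- theta) - 1) (- / theta).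

Definition is_tail_dep (C : R -> R -> R) (w1 w2 l : R) : Prop :=
  filterlim (fun s => C (s * w1) (s * w2) / s) (at_right 0) (locally l).

Definition TD_lt (C1 C2 : R -> R -> R) : Prop :=
  forall w1 w2, 0 < w1 -> 0 < w2 ->
    exists l1 l2, is_tail_dep C1 w1 w2 l1 /\ is_tail_dep C2 w1 w2 l2 /\ l1 < l2.

Definition loc_le (C1 C2 : R -> R -> R) : Prop :=
  exists eps, 0 < eps /\
    forall u1 u2, 0 <= u1 <= 1 -> 0 <= u2 <= 1 ->
      sqrt (u1 ^ 2 + u2 ^ 2) < eps -> C1 u1 u2 <= C2 u1 u2.

From Stdlib Require Import Reals Lra.
From Coquelicot Require Import Coquelicot.
Open Scope R_scope.

(* Along the ray s w the Marshall-Olkin copula is at most s^(2-alpha) w1^(1-alpha) w2,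
   so M_alpha(s w)/s = O(s^(1-alpha)) vanishes, whereas the Clayton copula is
   homogeneous: C_theta(s w)/s = (w1^-theta + w2^-theta - s^theta)^(-1/theta),
   which tends to a positive limit. Along the curve (t, t^alpha) on the other hand
   M_alpha(t, t^alpha) = t, while t^alpha < 1 makes the Clayton base exceed t^-theta,
   so C_theta(t, t^alpha) < t; as the curve enters every ball around the origin,
   M_alpha <=_loc C_theta fails. *)

Lemma at_right_0_limit (f : R -> R) (l : R) :
  (forall eps, 0 < eps -> exists d, 0 < d /\ forall s, 0 < s < d -> Rabs (f s - l) < eps) ->
  filterlim f (at_right 0) (locally l).
Proof.
  intros Hf. apply filterlim_locally. intros eps.
  destruct (Hf eps (cond_pos eps)) as [d [Hd Hfd]].
  exists (mkposreal d Hd). intros s Hs Hs0.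
  apply Hfd. apply Rabs_def2 in Hs. simpl in Hs. unfold minus, plus, opp in Hs. simpl in Hs. lra.
Qed.

Lemma Rpower_pos (x y : R) : 0 < Rpower x y.
Proof. apply exp_pos. Qed.

Lemma Rpower_1_l (y : R) : Rpower 1 y = 1.
Proof. unfold Rpower. rewrite ln_1, Rmult_0_r. apply exp_0. Qed.

Lemma Rpower_lt_near_0 (b eps : R) : 0 < b -> 0 < eps ->
  exists d, 0 < d /\ forall s, 0 < s < d -> Rpower s b < eps.
Proof.
  intros Hb Heps. exists (Rpower eps (/ b)). split; [apply Rpower_pos|].
  intros s Hs. apply Rlt_le_trans with (Rpower (Rpower eps (/ b)) b).
  - apply Rlt_Rpower_l; lra.
  - rewrite Rpower_mult, Rinv_l, Rpower_1; lra.
Qed.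

Lemma Rpower_lt_1 (t a : R) : 0 < t < 1 -> 0 < a -> Rpower t a < 1.
Proof. intros Ht Ha. rewrite <- (Rpower_1_l a). apply Rlt_Rpower_l; lra. Qed.

Lemma Rpower_lt_neg (x y c : R) : 0 < x < y -> c < 0 -> Rpower y c < Rpower x c.
Proof.
  intros Hxy Hc. apply exp_increasing.
  assert (ln x < ln y) by (apply ln_increasing; lra). nra.
Qed.

Lemma Rpower_gt_1_neg (t e : R) : 0 < t < 1 -> e < 0 -> 1 < Rpower t e.
Proof.
  intros Ht He. rewrite <- (Rpower_1_l e). apply Rpower_lt_neg; lra.
Qed.

Lemma MO_scaled_bounds (alpha s w1 w2 : R) : 0 < s -> 0 < w1 -> 0 < w2 ->
  0 <= MO alpha (s * w1) (s * w2) / s <= Rpower s (1 - alpha) * (Rpower w1 (1 - alpha) * w2).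
Proof.
  intros Hs H1 H2. unfold MO.
  destruct (Rle_dec (s * w1) 0); [nra|]. destruct (Rle_dec (s * w2) 0); [nra|].
  rewrite <- Rpower_mult_distr by lra.
  set (X := Rpower s (1 - alpha) * Rpower w1 (1 - alpha)).
  assert (HX : 0 < X) by (unfold X; assert (Hp := Rpower_pos s (1 - alpha));
                           assert (Hq := Rpower_pos w1 (1 - alpha)); nra).
  assert (Hm : 0 <= Rmin (X * (s * w2)) (s * w1) <= X * (s * w2)).
  { split; [apply Rmin_glb; nra | apply Rmin_l]. }
  replace (Rpower s (1 - alpha) * (Rpower w1 (1 - alpha) * w2)) with (X * (s * w2) / s)
    by (unfold X; field; lra).
  split; [apply Rdiv_le_0_compat | apply Rmult_le_compat_r; [left; apply Rinv_0_lt_compat|]];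
    lra.
Qed.

Lemma MO_tail_dep (alpha w1 w2 : R) : alpha < 1 -> 0 < w1 -> 0 < w2 ->
  is_tail_dep (MO alpha) w1 w2 0.
Proof.
  intros Ha H1 H2. apply at_right_0_limit. intros eps Heps.
  set (K := Rpower w1 (1 - alpha) * w2).
  assert (HK : 0 < K) by (unfold K; assert (Hq := Rpower_pos w1 (1 - alpha)); nra).
  destruct (Rpower_lt_near_0 (1 - alpha) (eps / K)) as [d [Hd Hsmall]];
    [lra | apply Rdiv_lt_0_compat; lra |].
  exists d. split; [exact Hd|]. intros s Hs.
  assert (Hb := MO_scaled_bounds alpha s w1 w2 ltac:(lra) H1 H2). fold K in Hb.
  assert (Hsk : Rpower s (1 - alpha) * K < eps).
  { assert (Hs' := Hsmall s Hs). apply (Rmult_lt_compat_r K) in Hs'; [|exact HK].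
    unfold Rdiv in Hs'. rewrite Rmult_assoc, Rinv_l, Rmult_1_r in Hs'; lra. }
  rewrite Rminus_0_r, Rabs_pos_eq; lra.
Qed.

Lemma Clayton_scaled (theta w1 w2 s : R) : 0 < theta -> 0 < w1 -> 0 < w2 -> 0 < s ->
  0 < Rpower w1 (- theta) + Rpower w2 (- theta) - Rpower s theta ->
  Clayton theta (s * w1) (s * w2) / s =
  Rpower (Rpower w1 (- theta) + Rpower w2 (- theta) - Rpower s theta) (- / theta).
Proof.
  intros Ht H1 H2 Hs HB.
  set (B := Rpower w1 (- theta) + Rpower w2 (- theta) - Rpower s theta) in *.
  unfold Clayton. destruct (Rle_dec (s * w1) 0); [nra|]. destruct (Rle_dec (s * w2) 0); [nra|].
  assert (Hbase : Rpower (s * w1) (- theta) + Rpower (s * w2) (- theta) - 1 =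
                  Rpower s (- theta) * B).
  { rewrite <- !Rpower_mult_distr by lra.
    assert (Rpower s (- theta) * Rpower s theta = 1).
    { rewrite <- Rpower_plus, Rplus_opp_l. apply Rpower_O; lra. }
    unfold B. nra. }
  rewrite Hbase, <- Rpower_mult_distr by (apply Rpower_pos || lra).
  rewrite Rpower_mult. replace (- theta * - / theta) with 1 by (field; lra).
  rewrite Rpower_1 by lra. field; lra.
Qed.

Lemma Clayton_tail_dep (theta w1 w2 : R) : 0 < theta -> 0 < w1 -> 0 < w2 ->
  is_tail_dep (Clayton theta) w1 w2 (Rpower (Rpower w1 (- theta) + Rpower w2 (- theta)) (- / theta)).
Proof.
  intros Ht H1 H2.
  set (A := Rpower w1 (- theta) + Rpower w2 (- theta)).
  assert (HA : 0 < A)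
    by (unfold A; assert (Hq1 := Rpower_pos w1 (- theta)); assert (Hq2 := Rpower_pos w2 (- theta)); lra).
  assert (Hcont : continuity_pt (fun x => Rpower x (- / theta)) A).
  { apply derivable_continuous_pt. exists (- / theta * Rpower A (- / theta - 1)).
    apply derivable_pt_lim_power; lra. }
  apply at_right_0_limit. intros eps Heps.
  destruct (Hcont eps Heps) as [r [Hr Hnear]]. simpl in Hnear; unfold R_dist in Hnear.
  destruct (Rpower_lt_near_0 theta (Rmin r A)) as [d [Hd Hsmall]];
    [lra | apply Rmin_glb_lt; lra |].
  exists d. split; [exact Hd|]. intros s Hs.
  assert (Hst := Hsmall s Hs). assert (Hr1 := Rmin_l r A). assert (Hr2 := Rmin_r r A).
  assert (Hps := Rpower_pos s theta).
  rewrite Clayton_scaled by (try fold A; lra). fold A.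
  apply Hnear. split; [split; [exact I | lra]|].
  rewrite Rabs_left; lra.
Qed.

Lemma MO_on_curve (alpha t : R) : 0 < t -> MO alpha t (Rpower t alpha) = t.
Proof.
  intros Ht. assert (Hp := Rpower_pos t alpha). unfold MO.
  destruct (Rle_dec t 0); [lra|]. destruct (Rle_dec (Rpower t alpha) 0); [lra|].
  rewrite <- Rpower_plus. replace (1 - alpha + alpha) with 1 by ring.
  rewrite Rpower_1 by lra. apply Rmin_left; lra.
Qed.

Lemma Clayton_lt_l (theta u v : R) : 0 < theta -> 0 < u -> 0 < v < 1 ->
  Clayton theta u v < u.
Proof.
  intros Ht Hu Hv. unfold Clayton.
  destruct (Rle_dec u 0); [lra|]. destruct (Rle_dec v 0); [lra|].
  assert (Hv1 := Rpower_gt_1_neg v (- theta) Hv ltac:(lra)).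
  assert (Hu0 := Rpower_pos u (- theta)).
  apply Rlt_le_trans with (Rpower (Rpower u (- theta)) (- / theta)).
  - apply Rpower_lt_neg; [lra|].
    assert (0 < / theta) by (apply Rinv_0_lt_compat; lra). lra.
  - rewrite Rpower_mult. replace (- theta * - / theta) with 1 by (field; lra).
    rewrite Rpower_1; lra.
Qed.

Lemma curve_enters_ball (alpha eps : R) : 0 < alpha -> 0 < eps ->
  exists t, 0 < t < 1 /\ sqrt (t ^ 2 + Rpower t alpha ^ 2) < eps.
Proof.
  intros Ha Heps.
  destruct (Rpower_lt_near_0 alpha (eps / 2)) as [d [Hd Hsmall]]; [lra | lra |].
  set (t := Rmin (Rmin (d / 2) (eps / 4)) (1 / 2)).
  assert (Ht1 := Rmin_l (Rmin (d / 2) (eps / 4)) (1 / 2)).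
  assert (Ht2 := Rmin_r (Rmin (d / 2) (eps / 4)) (1 / 2)).
  assert (Ht3 := Rmin_l (d / 2) (eps / 4)). assert (Ht4 := Rmin_r (d / 2) (eps / 4)).
  fold t in Ht1, Ht2.
  assert (Ht0 : 0 < t) by (unfold t; repeat apply Rmin_glb_lt; lra).
  assert (Hy := Hsmall t ltac:(lra)). assert (Hy0 := Rpower_pos t alpha).
  exists t. split; [lra|].
  rewrite <- (sqrt_pow2 eps) by lra. apply sqrt_lt_1; nra.
Qed.

Theorem mainTheorem4 (alpha theta : R) :
  0 < alpha < 1 -> 0 < theta ->
  (forall w1 w2, 0 < w1 -> 0 < w2 ->
     is_tail_dep (MO alpha) w1 w2 0 /\
     exists l, 0 < l /\ is_tail_dep (Clayton theta) w1 w2 l) /\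
  TD_lt (MO alpha) (Clayton theta) /\
  (forall t, 0 < t < 1 ->
     Clayton theta t (Rpower t alpha) < MO alpha t (Rpower t alpha) /\
     MO alpha t (Rpower t alpha) = t) /\
  ~ loc_le (MO alpha) (Clayton theta).
Proof.
  intros Ha Ht.
  assert (Hcurve : forall t, 0 < t < 1 ->
            Clayton theta t (Rpower t alpha) < MO alpha t (Rpower t alpha) /\
            MO alpha t (Rpower t alpha) = t).
  { intros t Htt. rewrite MO_on_curve by lra. split; [|reflexivity].
    apply Clayton_lt_l; [lra | lra |].
    split; [apply Rpower_pos | apply Rpower_lt_1; lra]. }
  split; [|split; [|split]].
  - intros w1 w2 H1 H2. split; [apply MO_tail_dep; lra|].
    eexists. split; [apply Rpower_pos | apply Clayton_tail_dep; lra].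
  - intros w1 w2 H1 H2. do 2 eexists.
    split; [apply MO_tail_dep; lra|]. split; [apply Clayton_tail_dep; lra | apply Rpower_pos].
  - exact Hcurve.
  - intros [eps [Heps Hle]].
    destruct (curve_enters_ball alpha eps ltac:(lra) Heps) as [t [Htt Hball]].
    assert (Hy := Rpower_lt_1 t alpha Htt ltac:(lra)). assert (Hy0 := Rpower_pos t alpha).
    specialize (Hle t (Rpower t alpha) ltac:(lra) ltac:(lra) Hball).
    destruct (Hcurve t Htt). lra.
Qed.
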